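(* The algebra $A_k$ is neither left nor right noetherian.
   Context: Let $k$ be a field. $A_k=k\langle x_1,\dots,x_7\rangle/(r_1,\dots,r_7)$, graded by $\deg x_i=1$, with $r_1=[x_2,x_3]+[x_4,x_5]+[x_6,x_7]$, $r_2=[x_3,x_1]+[x_4,x_6]+[x_7,x_5]$, $r_3=[x_1,x_2]+[x_6,x_5]+[x_7,x_4]$, $r_4=[x_5,x_1]+[x_3,x_7]+[x_6,x_2]$, $r_5=[x_1,x_4]+[x_2,x_7]+[x_3,x_6]$, $r_6=[x_7,x_1]+[x_5,x_3]+[x_2,x_4]$, $r_7=[x_1,x_6]+[x_4,x_3]+[x_5,x_2]$. *)

From HB Require Import structures.
From Stdlib Require Import List.
From mathcomp Require Import all_boot all_order all_algebra.
Set Implicit Arguments. Unset Strict Implicit. Unset Printing Implicit Defensive.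
Import GRing.Theory.
Local Open Scope ring_scope.

(* Words in the 7 letters x_1..x_7 (letter x_j is the ordinal j-1 : 'I_7). *)
Definition word := seq 'I_7.

Section FreeAlg.
Variable k : fieldType.

(* Elements of k<x_1,...,x_7> are the finitely supported coefficient
   functions on words; we work inside all functions word -> k. *)
Definition series := word -> k.

Definition fin_supp (f : series) : Prop :=
  exists s : seq word, forall w, f w != 0 -> w \in s.

Definition s0 : series := fun _ => 0.
Definition sadd (f g : series) : series := fun w => f w + g w.
Definition ssub (f g : series) : series := fun w => f w - g w.
Definition smul (f g : series) : series :=
  fun w => \sum_(i < (size w).+1) f (take i w) * g (drop i w).

Definition X (j : nat) : series := fun w => (w == [:: (inord j.-1 : 'I_7)])%:R.

Definition comm (a b : series) : series := ssub (smul a b) (smul b a).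
Definition C (i j : nat) : series := comm (X i) (X j).

(* the relations r_1, ..., r_7 (r (i-1) = r_i) *)
Definition r (i : 'I_7) : series :=
  match val i with
  | 0 => sadd (sadd (C 2 3) (C 4 5)) (C 6 7)
  | 1 => sadd (sadd (C 3 1) (C 4 6)) (C 7 5)
  | 2 => sadd (sadd (C 1 2) (C 6 5)) (C 7 4)
  | 3 => sadd (sadd (C 5 1) (C 3 7)) (C 6 2)
  | 4 => sadd (sadd (C 1 4) (C 2 7)) (C 3 6)
  | 5 => sadd (sadd (C 7 1) (C 5 3)) (C 2 4)
  | _ => sadd (sadd (C 1 6) (C 4 3)) (C 5 2)
  end.

Definition in_rel_ideal (f : series) : Prop :=
  exists l : seq (series * 'I_7 * series),
    (forall t, In t l -> fin_supp t.1.1 /\ fin_supp t.2) /\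
    (forall w, f w = \sum_(t <- l) smul (smul t.1.1 (r t.1.2)) t.2 w).

(* A (left / right) ideal of A_k = F/(r) is identified, as usual, with its
   preimage in F = k<x_1..x_7>, i.e. a left (right) ideal of F containing (r). *)
Definition ideal_base (L : series -> Prop) : Prop :=
  [/\ (forall f, L f -> fin_supp f),
      (forall f g, (forall w, f w = g w) -> L f -> L g),
      L s0,
      (forall f g, L f -> L g -> L (sadd f g)) &
      (forall f, fin_supp f -> in_rel_ideal f -> L f)].

Definition left_ideal_A (L : series -> Prop) : Prop :=
  ideal_base L /\ (forall a f, fin_supp a -> L f -> L (smul a f)).

Definition right_ideal_A (L : series -> Prop) : Prop :=
  ideal_base L /\ (forall a f, fin_supp a -> L f -> L (smul f a)).

Definition acc_on (P : (series -> Prop) -> Prop) : Prop :=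
  forall Ch : nat -> series -> Prop,
    (forall n, P (Ch n)) ->
    (forall n f, Ch n f -> Ch n.+1 f) ->
    exists N, forall n, (N <= n)%N -> forall f, Ch n f -> Ch N f.

Definition A_left_noetherian : Prop := acc_on left_ideal_A.
Definition A_right_noetherian : Prop := acc_on right_ideal_A.

End FreeAlg.

(* Let a, b be free noncommuting variables over M_2(k) and J = [[0,-1],[1,0]], so
   J^2 = -1. Sending x_1, x_2, x_6, x_5 to a, b, Ja, Jb and the other generators
   to 0 kills every relation: r_3 goes to [a,b] + J^2 [a,b], r_4 to
   J([b,a] + [a,b]), r_7 to J([a,a] + [b,b]), and the other four relations to 0.
   This gives an algebra map phi from A_k to M_2(k)<a,b>, and x_1, x_2 map onto
   the free algebra k<a,b>. In k<a,b> the right ideals spanned by the words having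
   an a among their first n letters form a strictly increasing chain, witnessed by
   b^n a; their preimages under phi are right ideals of A_k that never stabilise.
   Reading words from the right gives the left case. *)

From mathcomp Require Import all_boot all_algebra.
Set Implicit Arguments. Unset Strict Implicit. Unset Printing Implicit Defensive.
Import GRing.Theory.
Local Open Scope ring_scope.

Fixpoint words (A : finType) (n : nat) : seq (seq A) :=
  if n is n'.+1 then [seq x :: w | x <- enum A, w <- words A n'] else [:: [::]].

Lemma mem_words (A : finType) n w : (w \in words A n) = (size w == n).
Proof.
elim: n w => [|n IH] [|x w] //=.
- by apply/allpairsP => -[[y v] [_ _]].
- apply/allpairsP/eqP => [[[y v] [_ Hv [_ ->]]]|[Hw]].
    by move: Hv; rewrite IH => /eqP ->.
  by exists (x, w); rewrite mem_enum IH Hw.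
Qed.

Lemma uniq_words (A : finType) n : uniq (words A n).
Proof.
elim: n => [|n IH] //=.
apply: allpairs_uniq => //; first exact: enum_uniq.
by move=> [x w] [y v] _ _ /= [-> ->].
Qed.

Lemma big_words_take_drop (R : nmodType) (A : finType) n i
    (F : seq A -> seq A -> R) : (i <= n)%N ->
  \sum_(w <- words A n) F (take i w) (drop i w) =
  \sum_(u <- words A i) \sum_(v <- words A (n - i)) F u v.
Proof.
elim: i n F => [|i IH] n F Hi.
  by rewrite big_seq1 subn0; apply: eq_bigr => w _; rewrite take0 drop0.
case: n Hi => [|n] // Hi.
rewrite /= !big_allpairs_dep /=; apply: eq_bigr => x _.
exact: (IH n (fun u v => F (x :: u) v)).
Qed.

Section FreeAlgebra.
Variable k : fieldType.

Definition monom (w0 : word) : series k := fun w => (w == w0)%:R.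

Lemma fin_supp_add (f g : series k) :
  fin_supp f -> fin_supp g -> fin_supp (sadd f g).
Proof.
move=> [s1 Hf] [s2 Hg]; exists (s1 ++ s2) => w.
rewrite /sadd mem_cat; have [f0|/Hf -> //] := eqVneq (f w) 0.
by rewrite f0 add0r => /Hg ->; rewrite orbT.
Qed.

Lemma fin_supp_mul (f g : series k) :
  fin_supp f -> fin_supp g -> fin_supp (smul f g).
Proof.
move=> [s1 Hf] [s2 Hg]; exists [seq u ++ v | u <- s1, v <- s2] => w.
apply: contraNT => Nw; rewrite /smul big1 // => i _.
apply: contraNeq Nw; rewrite mulf_eq0 negb_or => /andP [/Hf Hu /Hg Hv].
by apply/allpairsP; exists (take i w, drop i w); rewrite cat_take_drop.
Qed.

Lemma fin_supp_monom w0 : fin_supp (monom w0).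
Proof.
exists [:: w0] => w; rewrite /monom inE.
by case: (w == w0); rewrite // mulr0n => /eqP.
Qed.

End FreeAlgebra.

Section Representation.
Variable k : fieldType.
Notation M := 'M[k]_2.

Definition J : M := \matrix_(i, j)
  (if (val i == 0%N) && (val j == 1%N) then -1
   else if (val i == 1%N) && (val j == 0%N) then 1 else 0).

Lemma mulJJ : J * J = -1.
Proof.
apply/matrixP => i j; rewrite !mxE !big_ord_recl big_ord0 !mxE.
by case: i j => [[|[|i]] Hi] [[|[|j]] Hj];
  rewrite //= ?(mulr0, mul0r, add0r, addr0, mulrN1, mulN1r, opprK, oppr0).
Qed.

(* [true] stands for a and [false] for b; the letter x_j is the ordinal j-1. *)
Definition phi_letter (x : 'I_7) (t : bool) : M :=
  match nat_of_ord x, t with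
  | 0, true | 1, false => 1
  | 5, true | 4, false => J
  | _, _ => 0
  end.

Fixpoint phi_word (w : word) (T : seq bool) : M :=
  match w, T with
  | x :: w', t :: T' => phi_letter x t * phi_word w' T'
  | [::], [::] => 1
  | _, _ => 0
  end.

Lemma phi_word_size w T : size w != size T -> phi_word w T = 0.
Proof. by elim: w T => [|x w IH] [|t T] //= /IH ->; rewrite mulr0. Qed.

Lemma phi_word_cat u v T1 T2 : size u = size T1 ->
  phi_word (u ++ v) (T1 ++ T2) = phi_word u T1 * phi_word v T2.
Proof.
elim: u T1 => [|x u IH] [|t T1] //=; first by rewrite mul1r.
by case=> Hs; rewrite IH // mulrA.
Qed.

Lemma phi_word_take_drop w T i : size w = size T ->
  phi_word w T = phi_word (take i w) (take i T) * phi_word (drop i w) (drop i T).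
Proof. by move=> Hs; rewrite -phi_word_cat ?cat_take_drop // !size_take Hs. Qed.

Lemma phi_word_conv u v T :
  \sum_(i < (size T).+1) phi_word u (take i T) * phi_word v (drop i T) =
  phi_word (u ++ v) T.
Proof.
have take_off (i : 'I_(size T).+1) : i != size u :> nat ->
    phi_word u (take i T) = 0.
  by move=> Hi; rewrite phi_word_size // (size_takel (ltn_ord i)) eq_sym.
have [Hu|Hu] := leqP (size u) (size T); last first.
  rewrite phi_word_size ?size_cat; last first.
    by rewrite gtn_eqF // (leq_trans Hu) ?leq_addr.
  rewrite big1 // => i _; rewrite take_off ?mul0r //.
  by rewrite ltn_eqF // (leq_trans (ltn_ord i) Hu).
rewrite (bigD1 (Ordinal (Hu : size u < (size T).+1)%N)) //= big1 ?addr0.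
  by rewrite -[in RHS](cat_take_drop (size u) T) phi_word_cat // size_takel.
by move=> i Hi; rewrite take_off ?mul0r.
Qed.

Definition coef_phi (f : series k) (T : seq bool) : M :=
  \sum_(w <- words _ (size T)) (f w)%:M * phi_word w T.

Lemma eq_coef_phi f g T :
  (forall w, f w = g w) -> coef_phi f T = coef_phi g T.
Proof. by move=> Efg; apply: eq_bigr => w _; rewrite Efg. Qed.

Lemma coef_phiD f g T : coef_phi (sadd f g) T = coef_phi f T + coef_phi g T.
Proof. by rewrite -big_split; apply: eq_bigr => w _; rewrite raddfD mulrDl. Qed.

Lemma coef_phiB f g T : coef_phi (ssub f g) T = coef_phi f T - coef_phi g T.
Proof. by rewrite -sumrB; apply: eq_bigr => w _; rewrite raddfB mulrBl. Qed.

Lemma coef_phi_sum (I : Type) (l : seq I) (F : I -> series k) T :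
  coef_phi (fun w => \sum_(t <- l) F t w) T = \sum_(t <- l) coef_phi (F t) T.
Proof.
rewrite /coef_phi; under eq_bigr do rewrite raddf_sum mulr_suml.
exact: exchange_big.
Qed.

Lemma coef_phiM f g T : coef_phi (smul f g) T =
  \sum_(i < (size T).+1) coef_phi f (take i T) * coef_phi g (drop i T).
Proof.
rewrite /coef_phi.
transitivity (\sum_(w <- words _ (size T)) \sum_(i < (size T).+1)
   ((f (take i w) * g (drop i w))%:M *
    (phi_word (take i w) (take i T) * phi_word (drop i w) (drop i T)))).
  rewrite big_seq [RHS]big_seq; apply: eq_bigr => w; rewrite mem_words => /eqP Hw.
  rewrite /smul Hw raddf_sum mulr_suml; apply: eq_bigr => i _.
  by rewrite -phi_word_take_drop.
rewrite exchange_big /=; apply: eq_bigr => i _.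
rewrite (@big_words_take_drop _ _ (size T) i
  (fun u v => (f u * g v)%:M * (phi_word u (take i T) * phi_word v (drop i T)))
  (ltn_ord i)).
rewrite (size_takel (ltn_ord i)) size_drop mulr_suml; apply: eq_bigr => u _.
rewrite mulr_sumr; apply: eq_bigr => v _.
rewrite scalar_mxM -!mulrA; congr (_ * _); rewrite !mulrA; congr (_ * _).
exact: esym (scalar_mxC _ _).
Qed.

Lemma coef_phi_monom w0 T : coef_phi (monom k w0) T = phi_word w0 T.
Proof.
have [Hs|Hs] := eqVneq (size w0) (size T).
  rewrite /coef_phi /monom (bigD1_seq w0) ?uniq_words ?mem_words ?Hs //=.
  rewrite eqxx mul1r big1 ?addr0 // => w /negbTE ->.
  by rewrite mulr0n raddf0 mul0r.
rewrite phi_word_size // /coef_phi big_seq big1 // => w.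
rewrite mem_words /monom => /eqP Hw.
have [Ew|_] := eqVneq w w0; last by rewrite mulr0n raddf0 mul0r.
by move: Hs; rewrite -Ew Hw eqxx.
Qed.

Lemma coef_phi_monomM u v T :
  coef_phi (smul (monom k u) (monom k v)) T = phi_word (u ++ v) T.
Proof.
by rewrite coef_phiM -phi_word_conv; apply: eq_bigr => i _; rewrite !coef_phi_monom.
Qed.

Lemma coef_phiC i j T : coef_phi (C k i j) T =
  phi_word [:: inord i.-1; inord j.-1] T - phi_word [:: inord j.-1; inord i.-1] T.
Proof. by rewrite coef_phiB !coef_phi_monomM. Qed.

Lemma coef_phi_rel l T : coef_phi (r k l) T = 0.
Proof.
case: l => [[|[|[|[|[|[|[|l]]]]]]] Hl] //;
  rewrite /r /= coef_phiD (coef_phiD (C k _ _)) !coef_phiC;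
  (have [T2|T2] := eqVneq 2 (size T);
   last by rewrite !phi_word_size ?subrr ?addr0);
  case: T T2 => [|t1 [|t2 [|]]] // _;
  case: t1; case: t2; rewrite /= /phi_letter !inordK //=;
  by rewrite ?(mulr1, mul1r, mulr0, mul0r, subrr, addr0, add0r, mulJJ, opprK,
               subr0, sub0r, addrN, addNr, oppr0).
Qed.

Lemma coef_phi_rel_ideal f T : in_rel_ideal f -> coef_phi f T = 0.
Proof.
move=> [l [_ Ef]]; rewrite (eq_coef_phi T Ef) coef_phi_sum big1 // => t _.
rewrite coef_phiM big1 // => i _; rewrite coef_phiM big1 ?mul0r // => j _.
by rewrite coef_phi_rel mulr0.
Qed.

(* The preimage under phi of the span of the words outside [bad]. *)
Definition zero_on (bad : pred (seq bool)) (f : series k) : Prop :=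
  fin_supp f /\ forall T, bad T -> coef_phi f T = 0.

Lemma ideal_base_zero_on bad : ideal_base (zero_on bad).
Proof.
split.
- by move=> f [].
- move=> f g Efg [[s Hs] Hf]; split.
    by exists s => w; rewrite -Efg; apply: Hs.
  by move=> T HT; rewrite -(Hf T HT); apply: eq_coef_phi => w; rewrite Efg.
- split; first by exists [::] => w; rewrite eqxx.
  by move=> T _; rewrite /coef_phi big1 // => w _; rewrite raddf0 mul0r.
- move=> f g [Hf f0] [Hg g0]; split; first exact: fin_supp_add.
  by move=> T HT; rewrite coef_phiD f0 ?g0 ?addr0.
- by move=> f Hf Hr; split=> // T _; apply: coef_phi_rel_ideal.
Qed.

Lemma left_ideal_zero_on (bad : pred (seq bool)) :
  (forall i T, bad T -> bad (drop i T)) ->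
  left_ideal_A (zero_on bad).
Proof.
move=> bad_drop; split; first exact: ideal_base_zero_on.
move=> a f Ha [Hf f0]; split; first exact: fin_supp_mul.
by move=> T HT; rewrite coef_phiM big1 // => i _; rewrite f0 ?mulr0 ?bad_drop.
Qed.

Lemma right_ideal_zero_on (bad : pred (seq bool)) :
  (forall i T, bad T -> bad (take i T)) ->
  right_ideal_A (zero_on bad).
Proof.
move=> bad_take; split; first exact: ideal_base_zero_on.
move=> a f Ha [Hf f0]; split; first exact: fin_supp_mul.
by move=> T HT; rewrite coef_phiM big1 // => i _; rewrite f0 ?mul0r ?bad_take.
Qed.

Definition lift_word (T : seq bool) : word :=
  [seq if t then ord0 else inord 1 | t <- T].

Lemma phi_word_lift T0 T : phi_word (lift_word T0) T = (T0 == T)%:R.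
Proof.
elim: T0 T => [|t0 T0 IH] [|t T] //=; rewrite IH eqseq_cons.
by case: t0; case: t; rewrite /phi_letter ?inordK //= ?(mul1r, mul0r).
Qed.

Lemma not_acc_zero_on (P : (series k -> Prop) -> Prop)
    (bad : nat -> pred (seq bool)) (t : nat -> seq bool) :
  (forall n, P (zero_on (bad n))) ->
  (forall n T, bad n.+1 T -> bad n T) ->
  (forall n, bad n (t n) && ~~ bad n.+1 (t n)) ->
  ~ acc_on P.
Proof.
move=> HP bad_mono sep acc.
have [N HN] := acc (fun n => zero_on (bad n)) HP
  (fun n f '(conj Hf f0) => conj Hf (fun T HT => f0 T (bad_mono n T HT))).
have /andP [badN good] := sep N.
have inN1 : zero_on (bad N.+1) (monom k (lift_word (t N))).
  split=> [|T HT]; first exact: fin_supp_monom.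
  rewrite coef_phi_monom phi_word_lift.
  by case: eqP => // E; move: good; rewrite E HT.
have [_ /(_ _ badN)] := HN N.+1 (leqnSn N) _ inN1.
by rewrite coef_phi_monom phi_word_lift eqxx; apply/eqP; apply: oner_neq0.
Qed.
End Representation.

Lemma notin_take_succ (T : seq bool) n :
  true \notin take n.+1 T -> true \notin take n T.
Proof. by apply: contra; rewrite -(take_takel _ (leqnSn n)); apply: mem_take. Qed.

Lemma first_a_at n :
  (true \notin take n (rcons (nseq n false) true)) &&
  (true \in take n.+1 (rcons (nseq n false) true)).
Proof.
rewrite -cats1 take_size_cat ?size_nseq //.
rewrite take_oversize ?size_cat ?size_nseq ?addn1 //.
by rewrite mem_nseq andbF mem_cat mem_seq1 orbT.
Qed.

Theorem corollary5p6 (k : fieldType) :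
  ~ A_left_noetherian k /\ ~ A_right_noetherian k.
Proof.
split.
- apply: (@not_acc_zero_on k _ (fun n T => true \notin take n (rev T))
                               (fun n => true :: nseq n false)).
  + move=> n; apply: left_ideal_zero_on => i T.
    by rewrite rev_drop takeC; apply: contra; apply: mem_take.
  + by move=> n T; apply: notin_take_succ.
  + by move=> n; rewrite rev_cons rev_nseq negbK; apply: first_a_at.
- apply: (@not_acc_zero_on k _ (fun n T => true \notin take n T)
                               (fun n => rcons (nseq n false) true)).
  + move=> n; apply: right_ideal_zero_on => i T.
    by rewrite takeC; apply: contra; apply: mem_take.
  + by move=> n T; apply: notin_take_succ.
  + by move=> n; rewrite negbK; apply: first_a_at.
Qed.
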